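(* Let $\mathcal{S}$ be a communicating system, $\mathbf{l_{in}},\mathbf{l_{fin}}$ global states and $w\in\Sigma^*$. Then $w\in\mathcal{L}(\mathcal{A}_{SR}(\mathbf{l_{in}},\mathbf{l_{mid}},\mathbf{l_{fin}}))$ for some global state $\mathbf{l_{mid}}$ if and only if $\mathbf{l_{in}}\xrightarrow{msc(w)}\mathbf{l_{fin}}$.
   Context: Fix finite sets $\mathbb{M}$ of messages and $\mathbb{P}$ of processes; actions are sends $\mathrm{send}(p,q,m)$ and receives $\mathrm{rec}(p,q,m)$ (process $q$ receives $m$ from $p$). A system $\mathcal{S}$ is a family of finite automata, one per process, with transitions labelled by that process's sends and receives; its global automaton $(L_{\mathcal{S}},\delta_{\mathcal{S}},\mathbf{l_0})$ is the asynchronous product, with global states $L_{\mathcal{S}}=\prod_p L_p$, where a transition of process $q$ changes only the $q$-component. For an action sequence $e=a_1\cdots a_n$, write $\mathbf{l}\xRightarrow{e}\mathbf{l'}$ if $\mathbf{l}\xrightarrow{a_1}\cdots\xrightarrow{a_n}\mathbf{l'}$ in the global automaton (control states only, no buffers). An MSC is $(Ev,\lambda,\prec_{po},\prec_{src})$ with $\lambda$ labelling events by actions, $\prec_{po}$ totally ordering each process's events and $\prec_{src}$ matching some sends $\mathrm{send}(p,q,m)$ bijectively to all receives $\mathrm{rec}(p,q,m)$; a linearization is the action sequence of a total order extending $(\prec_{po}\cup\prec_{src})^*$. For an action sequence $e=a_1\cdots a_n$, $msc(e)$ has events $1..n$, $i\prec_{po}j$ iff $i<j$ and $a_i,a_j$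 belong to the same process, and $i\prec_{src}j$ iff $a_i=\mathrm{send}(p,q,m)$ and $a_j=\mathrm{rec}(p,q,m)$ are the $\ell$-th actions with these labels for some $\ell$, $i<j$. For an MSC $\mu$, $\mathbf{l}\xrightarrow{\mu}\mathbf{l'}$ means $\mathbf{l}\xRightarrow{e}\mathbf{l'}$ for any linearization $e$ of $\mu$. $\Sigma=\{!?,!\}\times\mathbb{M}\times\mathbb{P}^2$, symbols written $!?m^{p\to q}$, $!m^{p\to q}$. Substitutions $\sigma_1(!?m^{p\to q})=\sigma_1(!m^{p\to q})=\mathrm{send}(p,q,m)$, $\sigma_2(!?m^{p\to q})=\mathrm{rec}(p,q,m)$, $\sigma_2(!m^{p\to q})=\varepsilon$, and $msc(w)=msc(\sigma_1(w)\sigma_2(w))$. For global states $\mathbf{l_{in}},\mathbf{l_{mid}},\mathbf{l_{fin}}$, the automaton $\mathcal{A}_{SR}(\mathbf{l_{in}},\mathbf{l_{mid}},\mathbf{l_{fin}})$ over $\Sigma$ has states $L_{\mathcal{S}}\times L_{\mathcal{S}}$, initial state $(\mathbf{l_{in}},\mathbf{l_{mid}})$, single final state $(\mathbf{l_{mid}},\mathbf{l_{fin}})$, and for every global transition $(\mathbf{l_s},\mathrm{send}(p,q,m),\mathbf{l_s'})\in\delta_{\mathcal{S}}$: transitions $((\mathbf{l_s},\mathbf{l}),!m^{p\to q},(\mathbf{l_s'},\mathbf{l}))$ for all $\mathbf{l}\in L_{\mathcal{S}}$, and, for every global transition $(\mathbf{l_r},\mathrm{rec}(p,q,m),\mathbf{l_r'})\in\delta_{\mathcal{S}}$,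 a transition $((\mathbf{l_s},\mathbf{l_r}),!?m^{p\to q},(\mathbf{l_s'},\mathbf{l_r'}))$. $\mathcal{L}(\cdot)$ denotes its language. *)

From Stdlib Require Import Relations.
From mathcomp Require Import all_boot.
Set Implicit Arguments. Unset Strict Implicit. Unset Printing Implicit Defensive.

Section Defs.
Variables (P M : finType).

(* Actions: send(p,q,m) and rec(p,q,m) (q receives m from p). *)
Inductive action := Send of P & P & M | Rec of P & P & M.

Definition proc (a : action) : P :=
  match a with Send p _ _ => p | Rec _ q _ => q end.

(* A communicating system: one finite automaton per process.
   Transitions of process p are only used with actions a such that proc a = p. *)
Record system := System {
  loc : P -> finType;
  init : forall p, loc p;
  trans : forall p, loc p -> action -> loc p -> Prop }.

Variable S : system.

Definition gstate := forall p : P, loc S p.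

Definition gstep (l : gstate) (a : action) (l' : gstate) : Prop :=
  @trans S (proc a) (l (proc a)) a (l' (proc a)) /\ (forall r, r <> proc a -> l' r = l r).

Fixpoint greach (l : gstate) (e : seq action) (l' : gstate) : Prop :=
  match e with
  | [::] => l = l'
  | a :: e' => exists l'', gstep l a l'' /\ greach l'' e' l'
  end.

Definition is_send_lbl p q m (a : action) : bool :=
  match a with Send p' q' m' => [&& p' == p, q' == q & m' == m] | _ => false end.
Definition is_rec_lbl p q m (a : action) : bool :=
  match a with Rec p' q' m' => [&& p' == p, q' == q & m' == m] | _ => false end.

Definition msc_po (e : seq action) (i j : nat) : Prop :=
  i < j /\ j < size e /\
  exists ai aj, onth e i = Some ai /\ onth e j = Some aj /\ proc ai = proc aj.

(* i <_src j : a_i = send(p,q,m), a_j = rec(p,q,m) are the l-th actions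
   with these labels (same number of earlier occurrences), and i < j. *)
Definition msc_src (e : seq action) (i j : nat) : Prop :=
  i < j /\ exists p q m,
    onth e i = Some (Send p q m) /\ onth e j = Some (Rec p q m) /\
    count (is_send_lbl p q m) (take i e) = count (is_rec_lbl p q m) (take j e).

Definition msc_order (e : seq action) : relation nat :=
  clos_refl_trans nat (fun i j => msc_po e i j \/ msc_src e i j).

(* lin is a linearization of msc(e): the action sequence of a total order
   (given as an enumeration s of the events) extending (po U src)^*. *)
Definition msc_linearization (e : seq action) (lin : seq action) : Prop :=
  exists s : seq nat,
    perm_eq s (iota 0 (size e)) /\
    (forall i j, i < size e -> j < size e -> msc_order e i j ->
       index i s <= index j s) /\
    lin = pmap (onth e) s.

Definition msc_reach (l : gstate) (e : seq action) (l' : gstate) : Prop :=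
  forall lin, msc_linearization e lin -> greach l lin l'.

Inductive sym := SR of P & P & M
               | SO of P & P & M.

Definition sigma1 (x : sym) : action :=
  match x with SR p q m => Send p q m | SO p q m => Send p q m end.
Definition sigma2 (x : sym) : option action :=
  match x with SR p q m => Some (Rec p q m) | SO _ _ _ => None end.

(* sigma1(w) sigma2(w) ; msc(w) := msc of this sequence *)
Definition word_actions (w : seq sym) : seq action :=
  map sigma1 w ++ pmap sigma2 w.

Definition asr_step (x : gstate * gstate) (c : sym) (y : gstate * gstate) : Prop :=
  match c with
  | SO p q m => gstep x.1 (Send p q m) y.1 /\ y.2 = x.2
  | SR p q m => gstep x.1 (Send p q m) y.1 /\ gstep x.2 (Rec p q m) y.2
  end.

Fixpoint asr_run (x : gstate * gstate) (w : seq sym) (y : gstate * gstate) : Prop :=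
  match w with
  | [::] => x = y
  | c :: w' => exists z, asr_step x c z /\ asr_run z w' y
  end.

Definition in_ASR (lin lmid lfin : gstate) (w : seq sym) : Prop :=
  asr_run (lin, lmid) w (lmid, lfin).

End Defs.

From mathcomp Require Import all_boot.
From Stdlib Require Import Relations FunctionalExtensionality.

Set Implicit Arguments. Unset Strict Implicit.

(* Transitions only change control states (there are no buffers), so a global
   run is the same thing as a family of local runs, one per process, along the
   projections of the action sequence.  Every linearization of msc(e) respects
   the process order, hence has the same projections as e itself: reaching
   l' along msc(e) is just reaching l' along e = sigma1(w) sigma2(w).  The
   automaton A_SR runs sigma1(w) on its first component and sigma2(w) on its
   second, so it accepts w through l_mid exactly when
   l_in ==sigma1(w)==> l_mid ==sigma2(w)==> l_fin. *)

Lemma pmap_onth_cat_iota (T : Type) (pre s : seq T) :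
  pmap (onth (pre ++ s)) (iota (size pre) (size s)) = s.
Proof.
elim: s pre => [|x s IHs] pre //=.
by rewrite onth_cat ltnn subnn /= -cat_rcons -(size_rcons pre x) IHs.
Qed.

Lemma pmap_onth_iota (T : Type) (s : seq T) : pmap (onth s) (iota 0 (size s)) = s.
Proof. exact: (pmap_onth_cat_iota [::]). Qed.

Lemma filter_pmap (T U : Type) (f : T -> option U) (a : pred U) (s : seq T) :
  filter a (pmap f s) = pmap f (filter (fun x => oapp a false (f x)) s).
Proof.
elim: s => [|x s IHs] //=.
by case fx: (f x) => [u|] /=; first case: (a u); rewrite /= ?fx IHs.
Qed.

Lemma index_iota m n i : m <= i < m + n -> index i (iota m n) = i - m.
Proof.
case/andP=> le_mi lt_i_mn.
have lt_im_n : i - m < n by rewrite ltn_subLR.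
by rewrite -{1}(subnKC le_mi) -(nth_iota 0 m lt_im_n) index_uniq ?size_iota ?iota_uniq.
Qed.

Section MscReach.
Variables (P M : finType) (S : system P M).

Fixpoint lreach (p : P) (x : loc S p) (e : seq (action P M)) (y : loc S p) : Prop :=
  match e with
  | [::] => x = y
  | a :: e' => exists z, trans x a z /\ lreach z e' y
  end.

Lemma greach_projE (l l' : gstate S) e :
  greach l e l' <-> forall p, lreach (l p) [seq a <- e | proc a == p] (l' p).
Proof.
elim: e l => [|a e IHe] l /=.
  split=> [-> //|eq_ll'].
  exact: functional_extensionality_dep.
split.
- move=> [l'' [[step_a frame] /IHe reach_e]] p.
  case: (eqVneq (proc a) p) => [<-|ne_ap]; first by exists (l'' (proc a)).
  by rewrite -frame //; apply/eqP; rewrite eq_sym.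
- move=> reach_p.
  have [z [step_a reach_a]] : exists z, trans (l (proc a)) a z /\
      lreach z [seq b <- e | proc b == proc a] (l' (proc a)).
    by have := reach_p (proc a); rewrite /= eqxx.
  exists (dfwith l z); split.
    split; first by rewrite dfwith_in.
    by move=> r ne_ra; rewrite dfwith_out //; apply/eqP => eq_ar; apply: ne_ra.
  apply/IHe => p; case: (eqVneq (proc a) p) => [<-|ne_ap]; first by rewrite dfwith_in.
  by rewrite dfwith_out //; have := reach_p p; rewrite /= (negbTE ne_ap).
Qed.

Lemma greach_cat (l l' : gstate S) e1 e2 :
  greach l (e1 ++ e2) l' <-> exists m, greach l e1 m /\ greach m e2 l'.
Proof.
elim: e1 l => [|a e1 IHe1] l /=; first by split=> [|[m [->]]]; [exists l|].
split=> [[l'' [step_a /IHe1 [m [reach_m reach_l']]]]|].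
  by exists m; split => //; exists l''.
move=> [m [[l'' [step_a reach_m]] reach_l']].
by exists l''; split => //; apply/IHe1; exists m.
Qed.

Lemma asr_runE (x1 x2 y1 y2 : gstate S) w :
  asr_run (x1, x2) w (y1, y2) <->
  greach x1 (map (@sigma1 P M) w) y1 /\ greach x2 (pmap (@sigma2 P M) w) y2.
Proof.
elim: w x1 x2 => [|[] p q m w IHw] x1 x2 /=; first by split=> [[-> ->]|[-> ->]].
- split=> [[[z1 z2] [[step1 step2] /IHw [reach1 reach2]]]|].
    by split; [exists z1 | exists z2].
  move=> [[z1 [step1 reach1]] [z2 [step2 reach2]]].
  by exists (z1, z2); split => //; apply/IHw.
- split=> [[[z1 z2] [[step1 /= ->] /IHw [reach1 reach2]]]|].
    by split => //; exists z1.
  move=> [[z1 [step1 reach1]] reach2].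
  by exists (z1, x2); split => //; apply/IHw.
Qed.

Lemma msc_order_le (e : seq (action P M)) i j : msc_order e i j -> i <= j.
Proof.
elim=> [x y [[lt_xy _]|[lt_xy _]]||x y z _ le_xy _ le_yz] //; try exact: ltnW.
exact: leq_trans le_yz.
Qed.

Lemma msc_linearization_refl (e : seq (action P M)) : msc_linearization e e.
Proof.
exists (iota 0 (size e)); split=> //; split; last by rewrite pmap_onth_iota.
by move=> i j lt_ie lt_je /msc_order_le; rewrite !index_iota ?subn0.
Qed.

Definition on_proc (e : seq (action P M)) (p : P) : pred nat :=
  fun i => if onth e i is Some a then proc a == p else false.

Lemma msc_po_on_proc e p i j :
  on_proc e p i -> on_proc e p j -> i < j -> j < size e -> msc_po e i j.
Proof.
rewrite /on_proc => proc_i proc_j lt_ij lt_je; split=> //; split=> //.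
case: (onth e i) proc_i => [ai /eqP proc_ai|] //.
case: (onth e j) proc_j => [aj /eqP proc_aj|] //.
by exists ai, aj; rewrite proc_ai proc_aj.
Qed.

Lemma linearization_on_proc_sorted e p (s : seq nat) :
  perm_eq s (iota 0 (size e)) ->
  (forall i j, i < size e -> j < size e -> msc_order e i j -> index i s <= index j s) ->
  sorted ltn [seq i <- s | on_proc e p i].
Proof.
move=> perm_s index_mono.
have uniq_s : uniq s by rewrite (perm_uniq perm_s) iota_uniq.
have lt_se k : k < size s -> nth 0 s k < size e.
  by move=> lt_ks; have := mem_nth 0 lt_ks; rewrite (perm_mem perm_s) mem_iota.
have ordered : pairwise [rel x y | on_proc e p x ==> on_proc e p y ==> (x < y)] s.
  apply/(pairwiseP 0) => i j; rewrite !inE => lt_is lt_js lt_ij /=.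
  apply/implyP => proc_i; apply/implyP => proc_j.
  rewrite ltnNge leq_eqVlt; apply/negP => /orP[|lt_ji].
    by rewrite nth_uniq // => /eqP eq_ji; rewrite eq_ji ltnn in lt_ij.
  have := index_mono _ _ (lt_se _ lt_js) (lt_se _ lt_is)
    (rt_step _ _ _ _ (or_introl (msc_po_on_proc proc_j proc_i lt_ji (lt_se _ lt_is)))).
  by rewrite !index_uniq // leqNgt lt_ij.
rewrite (sorted_pairwise ltn_trans).
apply: (sub_in_pairwise _ (filter_all _ _) (pairwise_filter _ ordered)).
by move=> x y; rewrite !unfold_in /= => -> ->.
Qed.

Lemma linearization_proj (e lin : seq (action P M)) p :
  msc_linearization e lin ->
  [seq a <- lin | proc a == p] = [seq a <- e | proc a == p].
Proof.
move=> [s [perm_s [index_mono ->]]].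
rewrite -{2}(pmap_onth_iota e) !filter_pmap; congr pmap.
apply: (irr_sorted_eq ltn_trans ltnn).
- exact: linearization_on_proc_sorted.
- exact/sorted_filter/iota_ltn_sorted/ltn_trans.
- exact/perm_mem/perm_filter.
Qed.

Lemma msc_reachE (l l' : gstate S) e : msc_reach l e l' <-> greach l e l'.
Proof.
split=> [|reach_e lin lin_e]; first by apply; apply: msc_linearization_refl.
apply/greach_projE => p; rewrite (linearization_proj p lin_e).
by move/greach_projE: reach_e.
Qed.

End MscReach.

Theorem lemma3 (P M : finType) (S : system P M) (lin lfin : gstate S)
    (w : seq (sym P M)) :
  (exists lmid : gstate S, in_ASR lin lmid lfin w) <->
  msc_reach lin (word_actions w) lfin.
Proof.
split=> [[lmid /asr_runE reach_mid]|/msc_reachE/greach_cat [lmid reach_mid]].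
  by apply/msc_reachE/greach_cat; exists lmid.
by exists lmid; apply/asr_runE.
Qed.
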